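(* In the abstract boundary problem setting described in the context, the operators $\gamma_0,\gamma_1:H_1\to K$ extend by continuity to bounded operators $\Gamma_0,\Gamma_1:\mathcal D(T^* )\to K'$ (with $\mathcal D(T^* )$ carrying the graph topology), and $$\langle T^*u,v\rangle-\langle u,T^*v\rangle=\langle \Gamma_1u,\Gamma_0v\rangle_{K',K}-\langle\Gamma_0u,\Gamma_1v\rangle_{K',K}$$ for every $u\in\mathcal D(T^* )$ and $v\in H_1$.
   Context: Inner products are linear in the first argument and conjugate-linear in the second. Let $H_0$ be a separable Hilbert space with inner product $\langle\cdot,\cdot\rangle$, let $T$ be a closed densely defined symmetric operator in $H_0$ with adjoint $T^*$, and equip $\mathcal D(T^* )$ with the graph norm. Let $H_1\subset H_0$ be a dense subspace which is a Hilbert space in its own right with bounded inclusion $H_1\to H_0$. Let $K^\partial$ be a separable Hilbert space with inner product $\langle\cdot,\cdot\rangle_\partial$ and $K\subset K^\partial$ a dense subspace which is a Hilbert space in its own right with bounded inclusion. Let $K'$ be the space of continuous anti-linear functionals on $K$ (a Hilbert space with the dual norm); $K^\partial$ is regarded as a dense subspace of $K'$ via $y\mapsto(x\mapsto\langle y,x\rangle_\partial)$, so $K\subset K^\partial\subset K'$. For $y\in K'$, $x\in K$ put $\langle y,x\rangle_{K',K}=y(x)$ and $\langle x,y\rangle_{K,K'}=\overline{y(x)}$; these agree with $\langle\cdot,\cdot\rangle_\partial$ when $y\in K^\partial$. Standing assumptions: $H_1\subset\mathcal D(T^* )$ and $H_1$ is dense in $\mathcal D(T^* )$ in the graph norm;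 $T^*|_{H_1}:H_1\to H_0$ is bounded; $\gamma_0,\gamma_1:H_1\to K$ are bounded linear operators such that $\gamma=\gamma_0\oplus\gamma_1:H_1\to K\oplus K$ is surjective; $\operatorname{Ker}\gamma$ is dense in $H_0$ and $\mathcal D(T)=\operatorname{Ker}\gamma$; and the Lagrange identity $\langle T^*u,v\rangle-\langle u,T^*v\rangle=\langle\gamma_1u,\gamma_0v\rangle_\partial-\langle\gamma_0u,\gamma_1v\rangle_\partial$ holds for all $u,v\in H_1$. *)

From HB Require Import structures.
From mathcomp Require Import all_boot all_order all_algebra.
From mathcomp Require Import reals.
From mathcomp Require Export complex.
Set Implicit Arguments. Unset Strict Implicit. Unset Printing Implicit Defensive.
Import Order.TTheory GRing.Theory Num.Theory.
Local Open Scope ring_scope.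

Section Hilbert.
Variable R : realType.
Local Notation C := (complex R).

Section OnSpace.
Variable V : lmodType C.

Definition is_inner (ip : V -> V -> C) : Prop :=
  [/\ (forall (a : C) (x y z : V), ip (a *: x + y) z = a * ip x z + ip y z),
      (forall x y : V, ip y x = (ip x y)^*),
      (forall x : V, 0 <= ip x x) &
      (forall x : V, ip x x = 0 -> x = 0)].

(* induced norm (a nonnegative real number, viewed inside C) *)
Definition hnorm (ip : V -> V -> C) (x : V) : C := sqrtC (ip x x).

Definition complete_for (nrm : V -> C) : Prop :=
  forall u : nat -> V,
    (forall eps : C, 0 < eps -> exists N : nat, forall m n : nat,
        (N <= m)%N -> (N <= n)%N -> nrm (u m - u n) < eps) ->
    exists l : V, forall eps : C, 0 < eps -> exists N : nat, forall n : nat,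
        (N <= n)%N -> nrm (u n - l) < eps.

Definition is_hilbert (ip : V -> V -> C) : Prop :=
  is_inner ip /\ complete_for (hnorm ip).

Definition separable_for (nrm : V -> C) : Prop :=
  exists d : nat -> V, forall (x : V) (eps : C), 0 < eps ->
    exists n : nat, nrm (x - d n) < eps.

Definition dense_in (nrm : V -> C) (A B : V -> Prop) : Prop :=
  forall x : V, B x -> forall eps : C, 0 < eps ->
    exists y : V, A y /\ nrm (x - y) < eps.

Definition subspace (D : V -> Prop) : Prop :=
  D 0 /\ forall (a : C) (x y : V), D x -> D y -> D (a *: x + y).

Definition linear_on (D : V -> Prop) (T : V -> V) : Prop :=
  subspace D /\ forall (a : C) (x y : V), D x -> D y -> T (a *: x + y) = a *: T x + T y.

Definition conv_to (nrm : V -> C) (u : nat -> V) (l : V) : Prop :=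
  forall eps : C, 0 < eps -> exists N : nat, forall n : nat,
    (N <= n)%N -> nrm (u n - l) < eps.

Definition closed_op (nrm : V -> C) (D : V -> Prop) (T : V -> V) : Prop :=
  forall (u : nat -> V) (x y : V), (forall n, D (u n)) ->
    conv_to nrm u x -> conv_to nrm (fun n => T (u n)) y -> D x /\ T x = y.

Definition symmetric_op (ip : V -> V -> C) (D : V -> Prop) (T : V -> V) : Prop :=
  forall x y : V, D x -> D y -> ip (T x) y = ip x (T y).

Definition is_adjoint (ip : V -> V -> C) (D : V -> Prop) (T : V -> V)
    (Ds : V -> Prop) (Ts : V -> V) : Prop :=
  (forall u : V, Ds u <-> exists w : V, forall v : V, D v -> ip (T v) u = ip v w) /\
  (forall u : V, Ds u -> forall v : V, D v -> ip (T v) u = ip v (Ts u)).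

Definition graph_norm (ip : V -> V -> C) (Ts : V -> V) (u : V) : C :=
  sqrtC (ip u u + ip (Ts u) (Ts u)).

End OnSpace.

Definition bounded_lin (V W : lmodType C) (nV : V -> C) (nW : W -> C)
    (f : V -> W) : Prop :=
  (forall (a : C) (x y : V), f (a *: x + y) = a *: f x + f y) /\
  exists c : C, forall x : V, nW (f x) <= c * nV x.

End Hilbert.

From HB Require Import structures.
From mathcomp Require Import all_boot all_order all_algebra.
From mathcomp Require Import reals complex.
From mathcomp Require Import ring lra.
From Stdlib Require Import Classical ClassicalEpsilon.
Import Order.TTheory GRing.Theory Num.Theory.
Local Open Scope complex_scope.
Local Open Scope ring_scope.

(* For u in D(T* ) and v in H1 consider the boundary form
     bform u v = <T* u, v> - <u, T* v>.
   Since T is symmetric, T is contained in T*; as D(T) = Ker gamma, bform u v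
   vanishes when gamma v = 0, so bform u v only depends on the boundary values
   (gamma0 v, gamma1 v).  It is linear in u, antilinear in v, and bounded by
   Cauchy-Schwarz: |bform u v| <= c |u|_graph |v|_H1.
   The open mapping theorem (proved below from the Baire category argument and
   successive approximation) yields bounded, not necessarily linear, lifts
   l0, l1 : K -> H1 with gamma (l0 x) = (x, 0) and gamma (l1 x) = (0, -x).
   Setting Gamma1 u x = bform u (l0 x) and Gamma0 u x = bform u (l1 x) gives
   bounded maps D(T* ) -> K'; the Lagrange identity shows that they extend
   gamma1 and gamma0, and Green's formula follows because v and
   l0 (gamma0 v) - l1 (gamma1 v) have the same boundary values.  Of the hypotheses of the theorem, the argument does
   not need separability, closedness of T, injectivity of the inclusions,
   completeness of H0 and K^d, nor the density assumptions other than the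
   density of D(T) in H0. *)

Set Implicit Arguments. Unset Strict Implicit. Unset Printing Implicit Defensive.

Section RealAndComplex.
Variable R : realType.
Local Notation C := (complex R).

Lemma ge0_realC (z : C) : 0 <= z -> z = (complex.Re z)%:C.
Proof. by case: z => a b; rewrite lecE /= => /andP[/eqP -> _]. Qed.

Lemma gt0_realC (z : C) : 0 < z -> z = (complex.Re z)%:C /\ 0 < complex.Re z.
Proof.
move=> hz; have h := ge0_realC (ltW hz); split => //.
by move: hz; rewrite h ltcR.
Qed.

Lemma Re_le_norm (z : C) : complex.Re z <= complex.Re `|z|.
Proof.
rewrite normc_def /=; case: z => a b /=; apply: le_trans (ler_norm a) _.
rewrite -sqrtr_sqr ler_sqrt; first by rewrite lerDl sqr_ge0.
by rewrite addr_ge0 ?sqr_ge0.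
Qed.

Lemma Re_normR (t : R) : complex.Re `|t%:C| = `|t|.
Proof. by rewrite normc_def /= expr0n addr0 sqrtr_sqr. Qed.

Lemma Re_mulR (c : C) (r : R) : complex.Re (c * r%:C) = complex.Re c * r.
Proof. by case: c => a b /=; rewrite mulr0 subr0. Qed.

Lemma sqrtC_R (r : R) : 0 <= r -> sqrtC (r%:C) = (Num.sqrt r)%:C.
Proof.
move=> r0; rewrite -{1}(sqr_sqrtr r0) rmorphXn /= sqrCK //.
by rewrite ler0c sqrtr_ge0.
Qed.

Lemma half_pow_small (e : R) : 0 < e -> exists N : nat, (2^-1) ^+ N < e.
Proof.
move=> he; have e0 : 0 <= e^-1 by rewrite invr_ge0 ltW.
have hb := archi_boundP e0.
exists (Num.Def.archi_bound e^-1).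
set N := Num.Def.archi_bound e^-1 in hb *.
have hN : (N%:R : R) < 2 ^+ N by rewrite -natrX ltr_nat ltn_expl.
rewrite exprVn -(invrK e) ltf_pV2 ?posrE ?exprn_gt0 ?invr_gt0 //.
exact: lt_trans hb hN.
Qed.

End RealAndComplex.

Section LinearMaps.
Variable R : realType.
Local Notation C := (complex R).
Variables V W : lmodType C.

Variable f : V -> W.
Hypothesis f_lin : forall (a : C) x y, f (a *: x + y) = a *: f x + f y.

Lemma lin0 : f 0 = 0.
Proof.
have := f_lin 1 0 0; rewrite !scale1r addr0.
by move=> /(congr1 (fun v => v - f 0)); rewrite subrr addrK => /esym.
Qed.
Lemma linZ a x : f (a *: x) = a *: f x.
Proof. by rewrite -[a *: x]addr0 f_lin lin0 addr0. Qed.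
Lemma linD x y : f (x + y) = f x + f y.
Proof. by have := f_lin 1 x y; rewrite !scale1r. Qed.
Lemma linN x : f (- x) = - f x.
Proof. by rewrite -scaleN1r linZ scaleN1r. Qed.
Lemma linB x y : f (x - y) = f x - f y.
Proof. by rewrite linD linN. Qed.

End LinearMaps.

Section Subspaces.
Variable R : realType.
Local Notation C := (complex R).
Variable V : lmodType C.
Variable S : V -> Prop.
Hypothesis S_sub : subspace S.

Lemma subspaceZ a x : S x -> S (a *: x).
Proof. by case: S_sub => S0 SL Sx; rewrite -[a *: x]addr0; exact: SL. Qed.
Lemma subspaceD x y : S x -> S y -> S (x + y).
Proof. by case: S_sub => _ SL Sx Sy; have := SL 1 x y Sx Sy; rewrite scale1r. Qed.
Lemma subspaceB x y : S x -> S y -> S (x - y).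
Proof. by move=> Sx Sy; apply: subspaceD => //; rewrite -scaleN1r; apply: subspaceZ. Qed.

End Subspaces.

Section Seminorms.
Variable R : realType.
Local Notation C := (complex R).
Variable V : lmodType C.

Variable n : V -> R.
Hypothesis nD : forall x y, n (x + y) <= n x + n y.
Hypothesis nZ : forall (t : R) x, n (t%:C *: x) = `|t| * n x.

Lemma snorm0 : n 0 = 0.
Proof. by have := nZ 0 0; rewrite scaler0 normr0 mul0r. Qed.
Lemma snormN x : n (- x) = n x.
Proof.
have -> : - x = (-1 : R)%:C *: x by rewrite rmorphN rmorph1 scaleN1r.
by rewrite nZ normrN normr1 mul1r.
Qed.
Lemma snormB x y : n (x - y) = n (y - x).
Proof. by rewrite -snormN opprB. Qed.
Lemma snorm_tri x y z : n (x - z) <= n (x - y) + n (y - z).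
Proof. by have := nD (x - y) (y - z); rewrite addrA subrK. Qed.

End Seminorms.

Definition rcauchy (R : realType) (V : lmodType (complex R)) (n : V -> R) (u : nat -> V) :=
  forall e, 0 < e -> exists N, forall m k, (N <= m)%N -> (N <= k)%N -> n (u m - u k) < e.
Definition rlim (R : realType) (V : lmodType (complex R)) (n : V -> R) (u : nat -> V) (l : V) :=
  forall e, 0 < e -> exists N, forall k, (N <= k)%N -> n (u k - l) < e.

Section InnerProducts.
Variable R : realType.
Local Notation C := (complex R).
Variable V : lmodType C.
Variable ip : V -> V -> C.
Hypothesis hip : is_inner ip.

Lemma ipL a x y z : ip (a *: x + y) z = a * ip x z + ip y z.
Proof. by case: hip. Qed.
Lemma ipC x y : ip y x = (ip x y)^*.
Proof. by case: hip. Qed.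
Lemma ip_ge0 x : 0 <= ip x x.
Proof. by case: hip. Qed.

Lemma ip0l z : ip 0 z = 0.
Proof.
have := ipL 1 0 0 z; rewrite scale1r addr0 mul1r.
by move=> /(congr1 (fun c => c - ip 0 z)); rewrite subrr addrK => /esym.
Qed.
Lemma ipDl x y z : ip (x + y) z = ip x z + ip y z.
Proof. by have := ipL 1 x y z; rewrite scale1r mul1r. Qed.
Lemma ipZl a x z : ip (a *: x) z = a * ip x z.
Proof. by rewrite -[a *: x]addr0 ipL ip0l addr0. Qed.
Lemma ipBl x y z : ip (x - y) z = ip x z - ip y z.
Proof. by rewrite ipDl -scaleN1r ipZl mulN1r. Qed.
Lemma ip0r z : ip z 0 = 0.
Proof. by rewrite ipC ip0l conjC0. Qed.
Lemma ipDr x y z : ip z (x + y) = ip z x + ip z y.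
Proof. by rewrite ipC ipDl rmorphD /= -!ipC. Qed.
Lemma ipZr a x z : ip z (a *: x) = a^* * ip z x.
Proof. by rewrite ipC ipZl rmorphM /= -ipC. Qed.
Lemma ipNr x z : ip z (- x) = - ip z x.
Proof. by rewrite -scaleN1r ipZr rmorphN rmorph1 mulN1r. Qed.
Lemma ipBr x y z : ip z (x - y) = ip z x - ip z y.
Proof. by rewrite ipDr ipNr. Qed.

Definition nr x := complex.Re (hnorm ip x).

Lemma hnormE x : hnorm ip x = (nr x)%:C.
Proof. by rewrite /nr -ge0_realC // /hnorm sqrtC_ge0 ip_ge0. Qed.
Lemma nr_ge0 x : 0 <= nr x.
Proof. by rewrite -ler0c -hnormE /hnorm sqrtC_ge0 ip_ge0. Qed.
Lemma ipxxE x : ip x x = (nr x ^+ 2)%:C.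
Proof. by rewrite rmorphXn /= -hnormE /hnorm sqrtCK. Qed.
Lemma Re_ipxx x : complex.Re (ip x x) = nr x ^+ 2.
Proof. by rewrite ipxxE. Qed.
Lemma nr_eq0 x : nr x = 0 -> x = 0.
Proof. by case: hip => _ _ _ ip_eq0 h; apply: ip_eq0; rewrite ipxxE h expr0n. Qed.
Lemma nr0 : nr 0 = 0.
Proof.
have := ipxxE 0; rewrite ip0l => /(congr1 (@complex.Re R)) /= /eqP.
by rewrite eq_sym sqrf_eq0 => /eqP.
Qed.

Lemma cauchy_schwarz x y : `|ip x y| <= (nr x * nr y)%:C.
Proof.
have [y0|ny] := eqVneq (nr y) 0.
  by rewrite (nr_eq0 y0) ip0r normr0 nr0 mulr0.
set z := ip x y; set s := ip y y.
have sE : s = (nr y ^+ 2)%:C by rewrite /s ipxxE.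
have s0 : 0 < s by rewrite sE ltcR exprn_gt0 // lt_def ny nr_ge0.
have sJ : s^* = s by rewrite sE; apply: conjc_real.
have h := ip_ge0 (x - (z / s) *: y).
have E : ip (x - (z / s) *: y) (x - (z / s) *: y) = ip x x - z * z^* / s.
  rewrite ipBl !ipBr !ipZl !ipZr -/z -/s (ipC x y) -/z.
  rewrite rmorphM /= rmorphV ?unitfE ?lt0r_neq0 //= sJ.
  by field; exact: lt0r_neq0.
rewrite E subr_ge0 ler_pdivrMr // in h.
rewrite -(ler_pXn2r (n:=2)) // ?nnegrE ?normr_ge0 ?ler0c ?mulr_ge0 ?nr_ge0 //.
rewrite normCK; apply: (le_trans h).
by rewrite ipxxE sE -rmorphM -rmorphXn exprMn.
Qed.

Lemma nrD x y : nr (x + y) <= nr x + nr y.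
Proof.
rewrite -(ler_pXn2r (n:=2)) // ?nnegrE ?nr_ge0 ?addr_ge0 ?nr_ge0 //.
rewrite -Re_ipxx ipDl !ipDr (ipC x y) !raddfD /= !Re_ipxx.
have h1 := Re_le_norm (ip x y).
have h2 : complex.Re `|ip x y| <= nr x * nr y.
  by have := cauchy_schwarz x y; rewrite [`|_|]ge0_realC ?normr_ge0 // lecR.
have h3 : complex.Re ((ip x y)^*) = complex.Re (ip x y) by case: (ip x y).
rewrite h3; nra.
Qed.

Lemma nrZ a x : nr (a *: x) = complex.Re `|a| * nr x.
Proof.
have ha : 0 <= complex.Re `|a| by rewrite -ler0c -ge0_realC ?normr_ge0.
apply/eqP; rewrite -(eqrXn2 (n:=2)) ?mulr_ge0 ?nr_ge0 //.
rewrite -Re_ipxx ipZl ipZr mulrA -normCK ipxxE [`|a|]ge0_realC ?normr_ge0 //.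
by rewrite -rmorphXn -rmorphM /= exprMn.
Qed.

Lemma nrZR (t : R) x : nr (t%:C *: x) = `|t| * nr x.
Proof. by rewrite nrZ Re_normR. Qed.

Lemma nrB x y : nr (x - y) = nr (y - x).
Proof. exact: (snormB nrZR). Qed.

Lemma complete_real : complete_for (hnorm ip) ->
  forall u, rcauchy nr u -> exists l, rlim nr u l.
Proof.
move=> hc u hu.
have [l hl] : exists l, forall eps : C, 0 < eps -> exists N : nat, forall n : nat,
    (N <= n)%N -> hnorm ip (u n - l) < eps.
  apply: hc => eps /gt0_realC [-> he].
  have [N hN] := hu _ he; exists N => m n hm hn.
  by rewrite hnormE ltcR; apply: hN.
exists l => e he.
have e0 : 0 < e%:C by rewrite ltcR.
have [N hN] := hl e%:C e0.
by exists N => k hk; have := hN k hk; rewrite hnormE ltcR.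
Qed.

(* Pythagoras: removing an orthogonal vector does not decrease the norm. *)
Lemma nr_le_orth v w : ip v w = 0 -> nr w <= nr (w - v).
Proof.
move=> vw; rewrite -(ler_pXn2r (n:=2)) // ?nnegrE ?nr_ge0 //.
rewrite -!Re_ipxx ipBl !ipBr vw (ipC v w) vw conjC0 !subr0 sub0r.
by rewrite raddfB raddfN /= opprK !Re_ipxx lerDl sqr_ge0.
Qed.

Lemma orth_dense (D : V -> Prop) w : dense_in (hnorm ip) D (fun _ => True) ->
  (forall v, D v -> ip v w = 0) -> w = 0.
Proof.
move=> hd hw; apply: nr_eq0; apply/le_anti; rewrite nr_ge0 andbT.
apply/ler_addgt0Pr => e he; rewrite add0r.
have e0 : 0 < e%:C by rewrite ltcR.
have [v [Dv hv]] := hd w I e%:C e0.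
rewrite hnormE ltcR in hv.
exact: ltW (le_lt_trans (nr_le_orth (hw v Dv)) hv).
Qed.

Definition gnr (Ts : V -> V) u := Num.sqrt (nr u ^+ 2 + nr (Ts u) ^+ 2).

Lemma graph_normE Ts u : graph_norm ip Ts u = (gnr Ts u)%:C.
Proof. by rewrite /graph_norm !ipxxE -rmorphD sqrtC_R // addr_ge0 ?sqr_ge0. Qed.

Lemma gnr_ge0 Ts u : 0 <= gnr Ts u.
Proof. exact: sqrtr_ge0. Qed.

Lemma nr_le_gnr Ts u : nr u <= gnr Ts u.
Proof.
rewrite -[leLHS]ger0_norm ?nr_ge0 // -sqrtr_sqr ler_sqrt ?lerDl ?sqr_ge0 //.
by rewrite addr_ge0 ?sqr_ge0.
Qed.

Lemma nrT_le_gnr Ts u : nr (Ts u) <= gnr Ts u.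
Proof.
rewrite -[leLHS]ger0_norm ?nr_ge0 // -sqrtr_sqr ler_sqrt ?lerDr ?sqr_ge0 //.
by rewrite addr_ge0 ?sqr_ge0.
Qed.

End InnerProducts.

Lemma bound_real (R : realType) (V W : lmodType (complex R))
    (ip : V -> V -> complex R) (ipW : W -> W -> complex R) (f : V -> W) (c : complex R) :
  is_inner ip -> is_inner ipW -> (forall x, hnorm ipW (f x) <= c * hnorm ip x) ->
  exists c', 0 <= c' /\ forall x, nr ipW (f x) <= c' * nr ip x.
Proof.
move=> hip hipW hb; exists `|complex.Re c|; split => // x.
have := hb x; rewrite (hnormE hip) (hnormE hipW) lecE => /andP[_].
rewrite Re_mulR /= => h; apply: (le_trans h).
by rewrite ler_wpM2r ?(nr_ge0 hip) // ler_norm.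
Qed.


Section OpenMapping.
Variable R : realType.
Local Notation C := (complex R).
Local Notation q := (2^-1 : R).

(* The setting of the open mapping theorem: a bounded linear map [L] from a
   complete subspace [S] of a seminormed space X onto a complete normed space Y. *)
Variables X Y : lmodType C.
Variables (nX : X -> R) (nY : Y -> R).
Hypothesis nX_ge0 : forall x, 0 <= nX x.
Hypothesis nXD : forall x x', nX (x + x') <= nX x + nX x'.
Hypothesis nXZ : forall (t : R) x, nX (t%:C *: x) = `|t| * nX x.
Hypothesis nY_ge0 : forall y, 0 <= nY y.
Hypothesis nYD : forall y y', nY (y + y') <= nY y + nY y'.
Hypothesis nYZ : forall (t : R) y, nY (t%:C *: y) = `|t| * nY y.
Hypothesis nY_eq0 : forall y, nY y = 0 -> y = 0.
Variable S : X -> Prop.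
Hypothesis S_sub : subspace S.
Hypothesis S_complete : forall u, (forall k, S (u k)) -> rcauchy nX u ->
  exists l, S l /\ rlim nX u l.
Hypothesis Y_complete : forall u, rcauchy nY u -> exists l, rlim nY u l.
Variable L : X -> Y.
Hypothesis L_lin : forall a x x', L (a *: x + x') = a *: L x + L x'.
Variable cL : R.
Hypothesis cL_ge0 : 0 <= cL.
Hypothesis L_bounded : forall x, nY (L x) <= cL * nX x.
Hypothesis L_onto : forall y, exists x, S x /\ L x = y.

Definition approx (n : nat) (y : Y) :=
  forall e, 0 < e -> exists x, [/\ S x, nX x <= n%:R & nY (L x - y) < e].

Lemma shrink_ball n y0 r : 0 < r -> ~ (forall y, nY (y - y0) < r -> approx n y) ->
  exists b : Y * R, [/\ 0 < b.2, b.2 <= r / 2 &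
    forall z, nY (z - b.1) <= b.2 ->
      nY (z - y0) < r /\ forall x, S x -> nX x <= n%:R -> L x <> z].
Proof.
move=> r0 not_approx.
have [y [y_in y_far]] : exists y, nY (y - y0) < r /\ ~ approx n y.
  apply: NNPP => H; apply: not_approx => y hy.
  by apply: NNPP => ny; apply: H; exists y.
have [e [e0 far]] : exists e, 0 < e /\
    forall x, S x -> nX x <= n%:R -> e <= nY (L x - y).
  apply: NNPP => H; apply: y_far => e e0; apply: NNPP => H'; apply: H.
  exists e; split => // x Sx hx; rewrite leNgt; apply/negP => lt.
  by apply: H'; exists x.
exists (y, Num.min (Num.min ((r - nY (y - y0)) / 2) (e / 2)) (r / 2)) => /=.
split; first by rewrite !lt_min !divr_gt0 // subr_gt0.
  by rewrite !ge_min lexx orbT.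
move=> z hz; split.
  have : nY (z - y) <= (r - nY (y - y0)) / 2 by apply: (le_trans hz); rewrite !ge_min lexx.
  have := snorm_tri nYD z y y0; lra.
move=> x Sx hx Lxz; have := far x Sx hx; rewrite Lxz.
have : nY (z - y) <= e / 2 by apply: (le_trans hz); rewrite !ge_min lexx orbT.
lra.
Qed.

Lemma nested_balls (c : nat -> Y) (r : nat -> R) :
  (forall k, 0 <= r k) -> (forall k, r k <= q ^+ k) ->
  (forall k z, nY (z - c k.+1) <= r k.+1 -> nY (z - c k) <= r k) ->
  exists l, forall k, nY (l - c k) <= r k.
Proof.
move=> r0 r_small step.
have nest k m : (k <= m)%N -> forall z, nY (z - c m) <= r m -> nY (z - c k) <= r k.
  elim: m => [|m IH]; first by rewrite leqn0 => /eqP ->.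
  rewrite leq_eqVlt => /orP[/eqP -> //|]; rewrite ltnS => km z hz.
  exact/IH/step.
have centre k : nY (c k - c k) <= r k by rewrite subrr (snorm0 nYZ).
have [l hl] : exists l, rlim nY c l.
  apply: Y_complete => e he.
  have [N hN] : exists N, q ^+ N < e / 2 by apply: half_pow_small; rewrite divr_gt0.
  exists N => m k hm hk.
  have h1 := nest N m hm _ (centre m).
  have h2 := nest N k hk _ (centre k).
  have := snorm_tri nYD (c m) (c N) (c k); rewrite (snormB nYZ (c N)).
  have := r_small N; lra.
exists l => k; apply/ler_addgt0Pr => e he.
have [N hN] := hl e he.
have hk := nest k (maxn N k) (leq_maxr _ _) _ (centre (maxn N k)).
have := hN (maxn N k) (leq_maxl _ _).
have := snorm_tri nYD l (c (maxn N k)) (c k); rewrite (snormB nYZ l (c (maxn N k))); lra.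
Qed.

Lemma baire : exists n y0 r, 0 < r /\ forall y, nY (y - y0) < r -> approx n y.
Proof.
apply: NNPP => meagre.
have step (p : nat * (Y * R)) : exists b : Y * R, 0 < p.2.2 ->
    [/\ 0 < b.2, b.2 <= p.2.2 / 2 & forall z, nY (z - b.1) <= b.2 ->
      nY (z - p.2.1) < p.2.2 /\ forall x, S x -> nX x <= p.1%:R -> L x <> z].
  case: p => n [y0 r] /=; have [r0|r0] := lerP r 0; first by exists (0, 0).
  have [|b hb] := @shrink_ball n y0 r r0; last by exists b.
  by move=> H; apply: meagre; exists n, y0, r.
have [f hf] := ClassicalEpsilon.choice _ step.
pose s k := nat_rect (fun _ => (Y * R)%type) (0, 1) (fun k p => f (k, p)) k.
have sS k : s k.+1 = f (k, s k) by [].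
have pos k : 0 < (s k).2.
  elim: k => [|k IH]; first exact: ltr01.
  by rewrite sS; case: (hf (k, s k) IH).
have hfk k : [/\ 0 < (s k.+1).2, (s k.+1).2 <= (s k).2 / 2 &
    forall z, nY (z - (s k.+1).1) <= (s k.+1).2 -> nY (z - (s k).1) < (s k).2 /\
      forall x, S x -> nX x <= k%:R -> L x <> z].
  by rewrite sS; exact: (hf (k, s k) (pos k)).
have [l hl] : exists l, forall k, nY (l - (s k).1) <= (s k).2.
  apply: nested_balls => [k|k|k z hz]; first exact: ltW.
    elim: k => [|k IH]; first by rewrite /= expr0.
    case: (hfk k) => _ h _; rewrite exprS; apply: (le_trans h); lra.
  by case: (hfk k) => _ _ /(_ z hz) [/ltW].
have [x [Sx Lx]] := L_onto l.
have [k hk] : exists k : nat, nX x <= k%:R.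
  by exists (Num.Def.archi_bound (nX x)); exact: ltW (archi_boundP (nX_ge0 x)).
by case: (hfk k) => _ _ /(_ l (hl k.+1)) [_ /(_ x Sx hk)].
Qed.

Lemma approx_small : exists N r, [/\ 0 <= N, 0 < r & forall y, nY y < r ->
  forall e, 0 < e -> exists x, [/\ S x, nX x <= N & nY (L x - y) < e]].
Proof.
have [n [y0 [r [r0 hb]]]] := baire.
exists (2 * n%:R), r; split => //; first by rewrite mulr_ge0 ?ler0n.
move=> y hy e he.
have he2 : 0 < e / 2 by rewrite divr_gt0.
have hy1 : nY (y0 + y - y0) < r by rewrite addrAC subrr add0r.
have hy2 : nY (y0 - y0) < r by rewrite subrr (snorm0 nYZ).
have [x1 [S1 n1 h1]] := hb (y0 + y) hy1 (e / 2) he2.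
have [x2 [S2 n2 h2]] := hb y0 hy2 (e / 2) he2.
exists (x1 - x2); split; first exact: subspaceB.
  by have := nXD x1 (- x2); rewrite (snormN nXZ); lra.
have -> : L (x1 - x2) - y = (L x1 - (y0 + y)) - (L x2 - y0).
  by rewrite (linB L_lin) opprB opprD !addrA (addrAC (L x1 - y0)) subrK addrAC.
by have := nYD (L x1 - (y0 + y)) (- (L x2 - y0)); rewrite (snormN nYZ); lra.
Qed.

(* By homogeneity, every y is approximable by images of norm <= M nY y. *)
Lemma approx_everywhere : exists M, 0 <= M /\ forall y e, 0 < e ->
  exists x, [/\ S x, nX x <= M * nY y & nY (L x - y) < e].
Proof.
have [N [r [N0 r0 hN]]] := approx_small.
exists (2 * N / r); split; first by rewrite divr_ge0 ?mulr_ge0 // ltW.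
move=> y e he.
have [ny0|ny0] := eqVneq (nY y) 0.
  exists 0; rewrite (nY_eq0 ny0) (snorm0 nXZ) (lin0 L_lin) subr0 (snorm0 nYZ) mulr0.
  by split => //; case: S_sub.
have nyp : 0 < nY y by rewrite lt_def ny0 nY_ge0.
set t := r / (2 * nY y).
have tp : 0 < t by rewrite divr_gt0 // mulr_gt0.
have hy' : nY (t%:C *: y) < r.
  rewrite nYZ gtr0_norm // /t.
  have -> : r / (2 * nY y) * nY y = r / 2 by field; rewrite gt_eqF.
  lra.
have [x' [S' n' h']] := hN _ hy' (t * e) (mulr_gt0 tp he).
exists ((t^-1)%:C *: x'); split.
- exact: subspaceZ.
- rewrite nXZ gtr0_norm ?invr_gt0 //.
  have -> : 2 * N / r * nY y = t^-1 * N by rewrite /t invf_div; field; rewrite gt_eqF.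
  by rewrite ler_wpM2l // invr_ge0 ltW.
- have -> : y = (t^-1)%:C *: (t%:C *: y).
    by rewrite scalerA -rmorphM mulVf ?gt_eqF // scale1r.
  rewrite (linZ L_lin) -scalerBr nYZ gtr0_norm ?invr_gt0 //.
  by rewrite -(ltr_pM2l tp) mulrA mulfV ?gt_eqF // mul1r.
Qed.

Section SuccessiveApproximation.
Variable M : R.
Hypothesis M_ge0 : 0 <= M.
Variable g : Y -> R -> X.
Hypothesis g_approx : forall y e, 0 < e ->
  [/\ S (g y e), nX (g y e) <= M * nY y & nY (L (g y e) - y) < e].
Variable y : Y.
Hypothesis y_pos : 0 < nY y.

(* Step k+1 corrects the residual of step k up to precision nY y * 2^-(k+1);
   the pair records (residual, partial solution). *)
Fixpoint approx_seq (k : nat) : Y * X :=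
  if k is k'.+1 then
    let x := g (approx_seq k').1 (nY y * q ^+ k) in
    ((approx_seq k').1 - L x, (approx_seq k').2 + x)
  else (y, 0).

Definition residual k := (approx_seq k).1.
Definition partial k := (approx_seq k).2.
Definition correction k := g (residual k) (nY y * q ^+ k.+1).

Lemma residualS k : residual k.+1 = residual k - L (correction k).
Proof. by []. Qed.
Lemma partialS k : partial k.+1 = partial k + correction k.
Proof. by []. Qed.

Lemma correction_spec k : [/\ S (correction k),
  nX (correction k) <= M * nY (residual k) &
  nY (L (correction k) - residual k) < nY y * q ^+ k.+1].
Proof.
have prec : 0 < nY y * q ^+ k.+1 by rewrite mulr_gt0 // exprn_gt0 // invr_gt0.
exact: g_approx prec.
Qed.

Lemma partial_S k : S (partial k).
Proof.
elim: k => [|k IH]; first by case: S_sub.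
by rewrite partialS; apply: subspaceD => //; case: (correction_spec k).
Qed.

Lemma residualE k : residual k = y - L (partial k).
Proof.
elim: k => [|k IH]; first by rewrite /residual /partial /= (lin0 L_lin) subr0.
by rewrite residualS partialS IH (linD L_lin) opprD addrA.
Qed.

Lemma residual_small k : nY (residual k) <= nY y * q ^+ k.
Proof.
case: k => [|k]; first by rewrite /residual /= expr0 mulr1.
by rewrite residualS (snormB nYZ); case: (correction_spec k) => _ _ /ltW.
Qed.

Lemma correction_small k : nX (correction k) <= M * nY y * q ^+ k.
Proof.
case: (correction_spec k) => _ h _; apply: (le_trans h).
by rewrite -mulrA ler_wpM2l // residual_small.
Qed.

Lemma partial_step k m : (k <= m)%N ->
  nX (partial m - partial k) <= 2 * M * nY y * (q ^+ k - q ^+ m).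
Proof.
elim: m => [|m IH].
  by rewrite leqn0 => /eqP ->; rewrite subrr (snorm0 nXZ) subrr mulr0.
rewrite leq_eqVlt => /orP[/eqP ->|]; first by rewrite !subrr (snorm0 nXZ) mulr0.
rewrite ltnS => km; rewrite partialS (addrAC _ (correction m)).
apply: (le_trans (nXD _ _)); apply: (le_trans (lerD (IH km) (correction_small m))).
have -> : q ^+ m = 2 * q ^+ m.+1.
  by rewrite exprS mulrA (_ : 2 * q = 1) ?mul1r //; lra.
by rewrite le_eqVlt; apply/orP; left; apply/eqP; ring.
Qed.

Lemma partial_close k m : (k <= m)%N ->
  nX (partial m - partial k) <= 2 * M * nY y * q ^+ k.
Proof.
move=> km; apply: (le_trans (partial_step km)).
apply: ler_wpM2l; first by rewrite !mulr_ge0 // ltW.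
by rewrite lerBlDr lerDl exprn_ge0 // invr_ge0.
Qed.

Lemma partial_cauchy : rcauchy nX partial.
Proof.
move=> e he; set A := 2 * M * nY y.
have A0 : 0 <= A by rewrite !mulr_ge0 // ltW.
have A1 : 0 < 2 * A + 1 by rewrite ltr_wpDl // mulr_ge0.
have [N hN] : exists N, q ^+ N < e / (2 * A + 1).
  by apply: half_pow_small; rewrite divr_gt0.
exists N => m k hm hk.
have h1 := partial_close hm; have h2 := partial_close hk.
have := snorm_tri nXD (partial m) (partial N) (partial k); rewrite (snormB nXZ (partial N)).
move: hN; rewrite ltr_pdivlMr // => hN.
have : 0 <= A * q ^+ N by rewrite mulr_ge0 ?exprn_ge0 ?invr_ge0.
rewrite -/A in h1 h2; nra.
Qed.

Lemma approx_seq_limit : exists x, [/\ S x, L x = y & nX x <= 2 * M * nY y].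
Proof.
have [l [Sl hl]] := S_complete partial_S partial_cauchy.
have key m : nY (L l - y) <= cL * nX (partial m - l) + nY y * q ^+ m.
  have -> : L l - y = L (l - partial m) - residual m.
    by rewrite residualE (linB L_lin) opprB addrA subrK.
  apply: le_trans (nYD _ _) _; rewrite (snormN nYZ) lerD ?residual_small //.
  by rewrite (snormB nXZ); apply: L_bounded.
exists l; split => //.
- apply/eqP; rewrite -subr_eq0; apply/eqP; apply: nY_eq0; apply/le_anti.
  rewrite nY_ge0 andbT; apply/ler_addgt0Pr => e he; rewrite add0r.
  have c1 : 0 < 2 * (cL + 1) by rewrite mulr_gt0 // ltr_wpDl.
  have y1 : 0 < 2 * (nY y + 1) by rewrite mulr_gt0 // ltr_wpDl // ltW.
  have [N1 hN1] := hl (e / (2 * (cL + 1))) (divr_gt0 he c1).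
  have [N2 hN2] : exists N, q ^+ N < e / (2 * (nY y + 1)).
    by apply: half_pow_small; rewrite divr_gt0.
  set m := maxn N1 N2; apply: le_trans (key m) _.
  have h1 := hN1 m (leq_maxl _ _).
  have h2 : q ^+ m < e / (2 * (nY y + 1)).
    by apply: le_lt_trans hN2; apply: ler_wiXn2l; rewrite ?leq_maxr //; lra.
  move: h1 h2; rewrite !ltr_pdivlMr // => h1 h2.
  have := nX_ge0 (partial m - l); have : 0 <= q ^+ m by rewrite exprn_ge0 // invr_ge0.
  nra.
- apply/ler_addgt0Pr => e he.
  have [N hN] := hl e he.
  have := partial_close (leq0n N); rewrite /partial /= subr0 expr0 mulr1 -/(partial N).
  have := snorm_tri nXD l (partial N) 0; rewrite !subr0 (snormB nXZ l).
  have := hN N (leqnn N); lra.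
Qed.

End SuccessiveApproximation.

Theorem open_mapping : exists M, 0 <= M /\
  forall y, exists x, [/\ S x, L x = y & nX x <= M * nY y].
Proof.
have [M [M0 hM]] := approx_everywhere.
have gex (p : Y * R) : exists x, 0 < p.2 ->
    [/\ S x, nX x <= M * nY p.1 & nY (L x - p.1) < p.2].
  case: p => [y e] /=; have [e0|e0] := lerP e 0; first by exists 0.
  by have [x hx] := hM y e e0; exists x.
have [g hg] := ClassicalEpsilon.choice _ gex.
exists (2 * M); split; first by rewrite mulr_ge0.
move=> y; have [ny0|ny0] := eqVneq (nY y) 0.
  exists 0; rewrite (nY_eq0 ny0) (snorm0 nXZ) (lin0 L_lin) (snorm0 nYZ) mulr0.
  by split => //; case: S_sub.
have yp : 0 < nY y by rewrite lt_def ny0 nY_ge0.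
exact: (approx_seq_limit M0 (g := fun a b => g (a, b)) (fun a b => hg (a, b)) yp).
Qed.

End OpenMapping.

Lemma kernel_closed (R : realType) (V W : lmodType (complex R))
    (ipV : V -> V -> complex R) (ipW : W -> W -> complex R) (f : V -> W) (c : R)
    (u : nat -> V) (l : V) :
  is_inner ipV -> is_inner ipW -> (forall a x y, f (a *: x + y) = a *: f x + f y) ->
  0 <= c -> (forall x, nr ipW (f x) <= c * nr ipV x) ->
  (forall k, f (u k) = 0) -> rlim (nr ipV) u l -> f l = 0.
Proof.
move=> hipV hipW f_lin c0 f_bd fu0 ul.
apply: (nr_eq0 hipW); apply/le_anti; rewrite (nr_ge0 hipW) andbT.
apply/ler_addgt0Pr => e he; rewrite add0r.
have c1 : 0 < c + 1 by rewrite ltr_wpDl.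
have [N hN] := ul (e / (c + 1)) (divr_gt0 he c1).
have -> : f l = f (l - u N) by rewrite (linB f_lin) fu0 subr0.
apply: (le_trans (f_bd _)); rewrite (nrB hipV).
apply: (le_trans (ler_wpM2l c0 (ltW (hN N (leqnn N))))).
by rewrite mulrA ler_pdivrMr //; nra.
Qed.

(* This is the
   open mapping theorem applied to gb on the closed subspace Ker ga. *)
Lemma bounded_lift (R : realType) (H1 K : lmodType (complex R))
    (ip1 : H1 -> H1 -> complex R) (ipK : K -> K -> complex R) (ga gb : H1 -> K) :
  is_hilbert ip1 -> is_hilbert ipK ->
  bounded_lin (hnorm ip1) (hnorm ipK) ga -> bounded_lin (hnorm ip1) (hnorm ipK) gb ->
  (forall y, exists h, ga h = 0 /\ gb h = y) ->
  exists (l : K -> H1) (M : R), 0 <= M /\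
    forall y, [/\ ga (l y) = 0, gb (l y) = y & nr ip1 (l y) <= M * nr ipK y].
Proof.
move=> [hip1 c1] [hipK cK] [ga_lin [ca hca]] [gb_lin [cb hcb]] onto.
have [ca' [ca0 ga_bd]] := bound_real hip1 hipK hca.
have [cb' [cb0 gb_bd]] := bound_real hip1 hipK hcb.
have ker_sub : subspace (fun h => ga h = 0).
  by split => [|a x y hx hy]; rewrite ?(lin0 ga_lin) // ga_lin hx hy scaler0 addr0.
have ker_complete u : (forall k, ga (u k) = 0) -> rcauchy (nr ip1) u ->
    exists l, ga l = 0 /\ rlim (nr ip1) u l.
  move=> u0 /(complete_real hip1 c1) [l ul]; exists l; split => //.
  exact: kernel_closed hip1 hipK ga_lin ca0 ga_bd u0 ul.
have [M [M0 hM]] := open_mapping (nr_ge0 hip1) (nrD hip1) (nrZR hip1)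
  (nr_ge0 hipK) (nrD hipK) (nrZR hipK) (nr_eq0 hipK) ker_sub ker_complete
  (complete_real hipK cK) gb_lin cb0 gb_bd onto.
have [l hl] := ClassicalEpsilon.choice _ hM.
by exists l, M.
Qed.

Section BoundaryForm.
Variable R : realType.
Local Notation C := (complex R).
Variables H0 H1 Kd K : lmodType C.
Variables (ip0 : H0 -> H0 -> C) (ip1 : H1 -> H1 -> C).
Variables (ipd : Kd -> Kd -> C) (ipK : K -> K -> C).
Variables (DT : H0 -> Prop) (T : H0 -> H0) (DTs : H0 -> Prop) (Ts : H0 -> H0).
Variables (i1 : H1 -> H0) (iK : K -> Kd) (g0 g1 : H1 -> K).
Hypothesis hip0 : is_inner ip0.
Hypothesis hH1 : is_hilbert ip1.
Hypothesis hK : is_hilbert ipK.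
Hypothesis hipd : is_inner ipd.
Hypothesis denseT : dense_in (hnorm ip0) DT (fun _ => True).
Hypothesis symT : symmetric_op ip0 DT T.
Hypothesis adjT : is_adjoint ip0 DT T DTs Ts.
Hypothesis bi1 : bounded_lin (hnorm ip1) (hnorm ip0) i1.
Hypothesis biK : bounded_lin (hnorm ipK) (hnorm ipd) iK.
Hypothesis bg0 : bounded_lin (hnorm ip1) (hnorm ipK) g0.
Hypothesis bg1 : bounded_lin (hnorm ip1) (hnorm ipK) g1.
Hypothesis H1sub : forall h, DTs (i1 h).
Hypothesis bTs : exists c, forall h, hnorm ip0 (Ts (i1 h)) <= c * hnorm ip1 h.
Hypothesis surjg : forall a b, exists h, g0 h = a /\ g1 h = b.
Hypothesis DTker : forall x, DT x <-> exists h, [/\ i1 h = x, g0 h = 0 & g1 h = 0].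
Hypothesis lagrange : forall u v,
  ip0 (Ts (i1 u)) (i1 v) - ip0 (i1 u) (Ts (i1 v))
  = ipd (iK (g1 u)) (iK (g0 v)) - ipd (iK (g0 u)) (iK (g1 v)).

Let hip1 : is_inner ip1 := proj1 hH1.
Let hipK : is_inner ipK := proj1 hK.

(* Since D(T) is dense, T* u is determined by the adjoint relation. *)
Lemma adjoint_unique u w : DTs u ->
  (forall v, DT v -> ip0 (T v) u = ip0 v w) -> Ts u = w.
Proof.
move=> Du hw; case: adjT => _ adj_eq.
apply/eqP; rewrite -subr_eq0; apply/eqP; apply: (orth_dense hip0 denseT) => v Dv.
by rewrite (ipBr hip0) -(adj_eq u Du v Dv) hw // subrr.
Qed.

Lemma adjoint_extends z : DT z -> DTs z /\ Ts z = T z.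
Proof.
move=> Dz; case: adjT => adj_dom _.
have Dsz : DTs z by apply/adj_dom; exists (T z) => v Dv; exact: symT.
by split => //; apply: adjoint_unique => // v Dv; exact: symT.
Qed.

Lemma adjoint_linear a u w : DTs u -> DTs w ->
  DTs (a *: u + w) /\ Ts (a *: u + w) = a *: Ts u + Ts w.
Proof.
move=> Du Dw; case: adjT => adj_dom adj_eq.
have E v : DT v -> ip0 (T v) (a *: u + w) = ip0 v (a *: Ts u + Ts w).
  by move=> Dv; rewrite !(ipDr hip0) !(ipZr hip0) (adj_eq u Du v Dv) (adj_eq w Dw v Dv).
have D' : DTs (a *: u + w) by apply/adj_dom; exists (a *: Ts u + Ts w).
by split => //; apply: adjoint_unique.
Qed.

Definition bform u v := ip0 (Ts u) (i1 v) - ip0 u (Ts (i1 v)).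

Lemma bform_ker u v : DTs u -> g0 v = 0 -> g1 v = 0 -> bform u v = 0.
Proof.
move=> Du h0 h1; case: adjT => _ adj_eq.
have Dv : DT (i1 v) by apply/DTker; exists v.
rewrite /bform (ipC hip0 (i1 v)) -(adj_eq u Du _ Dv) -(ipC hip0).
by rewrite (adjoint_extends Dv).2 subrr.
Qed.

Lemma bform_linr u a v w : DTs u -> bform u (a *: v + w) = a^* * bform u v + bform u w.
Proof.
move=> Du; case: bi1 => i1_lin _; rewrite /bform i1_lin.
rewrite (adjoint_linear a (H1sub v) (H1sub w)).2 !(ipDr hip0) !(ipZr hip0); ring.
Qed.

Lemma bform_linl a u w v : DTs u -> DTs w ->
  bform (a *: u + w) v = a * bform u v + bform w v.
Proof.
by move=> Du Dw; rewrite /bform (adjoint_linear a Du Dw).2 !(ipDl hip0) !(ipZl hip0); ring.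
Qed.

Lemma bformB u v w : DTs u -> bform u (v - w) = bform u v - bform u w.
Proof. by move=> Du; rewrite addrC -scaleN1r bform_linr // rmorphN rmorph1 mulN1r addrC. Qed.

Lemma bform_trace u v w : DTs u -> g0 v = g0 w -> g1 v = g1 w -> bform u v = bform u w.
Proof.
case: bg0 bg1 => [g0_lin _] [g1_lin _] Du h0 h1; apply/eqP; rewrite -subr_eq0 -bformB //.
by rewrite bform_ker ?(linB g0_lin) ?(linB g1_lin) ?h0 ?h1 ?subrr.
Qed.

(* Continuity: |bform u v| <= c |u|_graph |v|_H1 by Cauchy–Schwarz. *)
Lemma bform_bound : exists c, 0 <= c /\
  forall u v, `|bform u v| <= (c * gnr ip0 Ts u * nr ip1 v)%:C.
Proof.
have [ci [ci0 i1_bd]] : exists c, 0 <= c /\ forall h, nr ip0 (i1 h) <= c * nr ip1 h.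
  by case: bi1 => _ [c hc]; apply: (bound_real hip1 hip0 hc).
have [cT [cT0 Ts_bd]] : exists c, 0 <= c /\ forall h, nr ip0 (Ts (i1 h)) <= c * nr ip1 h.
  by case: bTs => c hc; apply: (bound_real (f := fun h => Ts (i1 h)) hip1 hip0 hc).
exists (ci + cT); split; first by rewrite addr_ge0.
move=> u v; apply: (le_trans (ler_normB _ _)).
apply: (le_trans (lerD (cauchy_schwarz hip0 _ _) (cauchy_schwarz hip0 _ _))).
rewrite -rmorphD lecR mulrDl mulrDl.
apply: lerD; rewrite -mulrA mulrCA.
- by apply: ler_pM; rewrite ?(nr_ge0 hip0) ?nrT_le_gnr ?i1_bd.
- by apply: ler_pM; rewrite ?(nr_ge0 hip0) ?nr_le_gnr ?Ts_bd.
Qed.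

(* The properties required of Gamma0 and Gamma1: for u in D(T* ) they are
   antilinear functionals on K, linear in u and bounded from D(T* ) with the
   graph norm to the dual K' of K. *)
Definition boundary_functional (G : H0 -> K -> C) : Prop :=
  [/\ (forall u, DTs u -> forall (a : C) (x y : K),
          G u (a *: x + y) = a^* * G u x + G u y),
      (forall (a : C) (u w : H0), DTs u -> DTs w -> forall x : K,
          G (a *: u + w) x = a * G u x + G w x) &
      (exists c : C, forall u, DTs u -> forall x : K,
          `|G u x| <= c * graph_norm ip0 Ts u * hnorm ipK x)].

Lemma lift_functional (l : K -> H1) (A0 A1 : K -> K) (M : R) :
  (forall a x y, A0 (a *: x + y) = a *: A0 x + A0 y) ->
  (forall a x y, A1 (a *: x + y) = a *: A1 x + A1 y) ->
  (forall x, g0 (l x) = A0 x /\ g1 (l x) = A1 x) ->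
  0 <= M -> (forall x, nr ip1 (l x) <= M * nr ipK x) ->
  boundary_functional (fun u x => bform u (l x)).
Proof.
move=> A0_lin A1_lin hl M0 l_bd; case: bg0 bg1 => [g0_lin _] [g1_lin _].
split => /=.
- move=> u Du a x y; rewrite -bform_linr //.
  case: (hl (a *: x + y)) (hl x) (hl y) => [axy0 axy1] [x0 x1] [y0 y1].
  apply: bform_trace => //.
    by rewrite g0_lin axy0 x0 y0 A0_lin.
  by rewrite g1_lin axy1 x1 y1 A1_lin.
- by move=> a u w Du Dw x; rewrite bform_linl.
- have [c [c0 hc]] := bform_bound; exists (c * M)%:C => u Du x.
  apply: (le_trans (hc u (l x))).
  rewrite (graph_normE hip0) (hnormE hipK) -!rmorphM lecR.
  have -> : c * M * gnr ip0 Ts u * nr ipK x = c * gnr ip0 Ts u * (M * nr ipK x) by ring.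
  by apply: ler_wpM2l; rewrite ?mulr_ge0 ?gnr_ge0.
Qed.

Lemma boundary_lifts : exists (l0 l1 : K -> H1) (M : R), 0 <= M /\ forall x,
  [/\ g0 (l0 x) = x /\ g1 (l0 x) = 0, g0 (l1 x) = 0 /\ g1 (l1 x) = - x,
      nr ip1 (l0 x) <= M * nr ipK x & nr ip1 (l1 x) <= M * nr ipK x].
Proof.
have onto0 y : exists h, g1 h = 0 /\ g0 h = y.
  by have [h [? ?]] := surjg y 0; exists h.
have [p0 [M0 [M0_ge0 hp0]]] := bounded_lift hH1 hK bg1 bg0 onto0.
have [p1 [M1 [M1_ge0 hp1]]] := bounded_lift hH1 hK bg0 bg1 (surjg 0).
exists p0, (fun x => p1 (- x)), (M0 + M1); split; first by rewrite addr_ge0.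
move=> x; have [a0 b0 n0] := hp0 x; have [a1 b1 n1] := hp1 (- x).
split => //.
- by apply: le_trans n0 _; rewrite ler_wpM2r ?(nr_ge0 hipK) // lerDl.
- apply: le_trans n1 _; rewrite (snormN (nrZR hipK)).
  by rewrite ler_wpM2r ?(nr_ge0 hipK) // lerDr.
Qed.

(* Theorem 4.3, in the present setting: Gamma1 u x = bform u (l0 x) and
   Gamma0 u x = bform u (l1 x) extend gamma_1 and gamma_0 (by the Lagrange
   identity) and satisfy the generalized Green formula (by [bform_trace]). *)
Theorem boundary_extension : exists G0 G1 : H0 -> K -> C,
  (forall G, G = G0 \/ G = G1 -> boundary_functional G) /\
  (forall h x, G0 (i1 h) x = ipd (iK (g0 h)) (iK x)) /\
  (forall h x, G1 (i1 h) x = ipd (iK (g1 h)) (iK x)) /\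
  (forall u v, DTs u ->
     ip0 (Ts u) (i1 v) - ip0 u (Ts (i1 v)) = G1 u (g0 v) - G0 u (g1 v)).
Proof.
have [l0 [l1 [M [M0 hl]]]] := boundary_lifts.
case: biK bg0 bg1 => [iK_lin _] [g0_lin _] [g1_lin _].
exists (fun u x => bform u (l1 x)), (fun u x => bform u (l0 x)).
split; [|split; [|split]] => /=.
- move=> G [->|->].
  + apply: (lift_functional (A0 := fun=> 0) (A1 := -%R) _ _ _ M0).
    * by move=> a x y; rewrite scaler0 addr0.
    * by move=> a x y; rewrite opprD scalerN.
    * by move=> x; case: (hl x).
    * by move=> x; case: (hl x).
  + apply: (lift_functional (A0 := id) (A1 := fun=> 0) _ _ _ M0) => //.
    * by move=> a x y; rewrite scaler0 addr0.
    * by move=> x; case: (hl x).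
    * by move=> x; case: (hl x).
- move=> h x; rewrite /bform lagrange; case: (hl x) => _ [-> ->] _ _.
  by rewrite (lin0 iK_lin) (linN iK_lin) (ip0r hipd) (ipNr hipd) sub0r opprK.
- move=> h x; rewrite /bform lagrange; case: (hl x) => [[-> ->]] _ _ _.
  by rewrite (lin0 iK_lin) (ip0r hipd) subr0.
- move=> u v Du; rewrite -bformB //; apply: bform_trace => //.
    by case: (hl (g0 v)) (hl (g1 v)) => [[a0 _] _ _ _] [_ [a1 _] _ _]; rewrite (linB g0_lin) a0 a1 subr0.
  by case: (hl (g0 v)) (hl (g1 v)) => [[_ b0] _ _ _] [_ [_ b1] _ _]; rewrite (linB g1_lin) b0 b1 sub0r opprK.
Qed.

End BoundaryForm.

Unset Implicit Arguments. Set Strict Implicit.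

Theorem theorem4p3 (R : realType) (H0 H1 Kd K : lmodType (complex R))
  (ip0 : H0 -> H0 -> complex R) (ip1 : H1 -> H1 -> complex R)
  (ipd : Kd -> Kd -> complex R) (ipK : K -> K -> complex R)
  (DT : H0 -> Prop) (T : H0 -> H0) (DTs : H0 -> Prop) (Ts : H0 -> H0)
  (i1 : H1 -> H0) (iK : K -> Kd) (g0 g1 : H1 -> K)
  (* H0 : separable Hilbert space *)
  (hH0 : is_hilbert ip0) (sH0 : separable_for (hnorm ip0))
  (* T : closed, densely defined, symmetric operator in H0; (DTs, Ts) = Tstar *)
  (linT : linear_on DT T) (denseT : dense_in (hnorm ip0) DT (fun _ => True))
  (symT : symmetric_op ip0 DT T) (closedT : closed_op (hnorm ip0) DT T)
  (adjT : is_adjoint ip0 DT T DTs Ts)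
  (* H1 : dense subspace of H0, Hilbert in its own right, bounded inclusion i1 *)
  (hH1 : is_hilbert ip1) (inj1 : injective i1)
  (bi1 : bounded_lin (hnorm ip1) (hnorm ip0) i1)
  (dense1 : dense_in (hnorm ip0) (fun x => exists h, i1 h = x) (fun _ => True))
  (* K^∂ separable Hilbert; K dense subspace, Hilbert, bounded inclusion iK *)
  (hKd : is_hilbert ipd) (sKd : separable_for (hnorm ipd))
  (hK : is_hilbert ipK) (injK : injective iK)
  (biK : bounded_lin (hnorm ipK) (hnorm ipd) iK)
  (denseK : dense_in (hnorm ipd) (fun y => exists k, iK k = y) (fun _ => True))
  (* H1 ⊂ D(Tstar), dense in the graph norm *)
  (H1sub : forall h : H1, DTs (i1 h))
  (H1dense : dense_in (graph_norm ip0 Ts) (fun x => exists h, i1 h = x) DTs)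
  (* Tstar|_{H1} : H1 -> H0 bounded *)
  (bTs : exists c : complex R, forall h : H1, hnorm ip0 (Ts (i1 h)) <= c * hnorm ip1 h)
  (* gamma_0, gamma_1 bounded, gamma = gamma_0 ⊕ gamma_1 surjective *)
  (bg0 : bounded_lin (hnorm ip1) (hnorm ipK) g0)
  (bg1 : bounded_lin (hnorm ip1) (hnorm ipK) g1)
  (surjg : forall a b : K, exists h : H1, g0 h = a /\ g1 h = b)
  (* Ker gamma dense in H0 and D(T) = Ker gamma *)
  (denseKer : dense_in (hnorm ip0)
     (fun x => exists h, [/\ i1 h = x, g0 h = 0 & g1 h = 0]) (fun _ => True))
  (DTker : forall x : H0, DT x <-> exists h, [/\ i1 h = x, g0 h = 0 & g1 h = 0])
  (* Lagrange identity on H1 *)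
  (lagrange : forall u v : H1,
     ip0 (Ts (i1 u)) (i1 v) - ip0 (i1 u) (Ts (i1 v))
     = ipd (iK (g1 u)) (iK (g0 v)) - ipd (iK (g0 u)) (iK (g1 v))) :
  (* Gamma_0, Gamma_1 : D(Tstar) -> K' (continuous antilinear functionals on K) *)
  exists G0 G1 : H0 -> K -> complex R,
    (forall G, G = G0 \/ G = G1 ->
      [/\ (* values are anti-linear functionals on K *)
          (forall u : H0, DTs u -> forall (a : complex R) (x y : K),
              G u (a *: x + y) = a^* * G u x + G u y),
          (* linear on D(Tstar) *)
          (forall (a : complex R) (u w : H0), DTs u -> DTs w -> forall x : K,
              G (a *: u + w) x = a * G u x + G w x) &
          (* bounded D(Tstar) (graph norm) -> K' (dual norm) *)
          (exists c : complex R, forall u : H0, DTs u -> forall x : K,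
              `|G u x| <= c * graph_norm ip0 Ts u * hnorm ipK x)]) /\
    (* extensions of gamma_0, gamma_1 (K ⊂ K^∂ ⊂ K') *)
    (forall (h : H1) (x : K), G0 (i1 h) x = ipd (iK (g0 h)) (iK x)) /\
    (forall (h : H1) (x : K), G1 (i1 h) x = ipd (iK (g1 h)) (iK x)) /\
    (* generalized Green formula *)
    (forall (u : H0) (v : H1), DTs u ->
       ip0 (Ts u) (i1 v) - ip0 u (Ts (i1 v)) = G1 u (g0 v) - G0 u (g1 v)).
Proof.
exact: (boundary_extension (proj1 hH0) hH1 hK (proj1 hKd) denseT symT adjT
  bi1 biK bg0 bg1 H1sub bTs surjg DTker lagrange).
Qed.
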